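(* Let $\ell\ge1$, $N=2^\ell$, let ${\mathbf x}_0,\dots,{\mathbf x}_{\omega-1}\in\mathbb{F}_2^\ell$ be distinct, and $D=P_{{\mathbf x}_0}+\cdots+P_{{\mathbf x}_{\omega-1}}$. Let $R$ be the number of ordered pairs $\big((u,v,w),(u',v',w')\big)$ of triples of indices in $\{0,\dots,\omega-1\}$ with $u\ne v$, $v\ne w$, $u'\ne v'$, $v'\ne w'$, $u\ne u'$, $w\ne w'$, and ${\mathbf x}_u+{\mathbf x}_v+{\mathbf x}_w={\mathbf x}_{u'}+{\mathbf x}_{v'}+{\mathbf x}_{w'}$. Then the number of $6$-cycles in the Tanner graph of $D$ is $\mathcal{N}_6=\dfrac{2^\ell}{6}\,R$.
   Context: Rows and columns of $N\times N$ binary matrices are indexed by $\mathbb{F}_2^\ell$ via ${\mathbf x}=(x_1,\dots,x_\ell)\leftrightarrow 1+\sum_i x_i2^{i-1}$. For ${\mathbf a}\in\mathbb{F}_2^\ell$, $P_{\mathbf a}$ is the $N\times N$ binary matrix with $(P_{\mathbf a})_{{\mathbf x},{\mathbf y}}=1$ iff ${\mathbf y}={\mathbf x}+{\mathbf a}$. The Tanner graph of a binary matrix is the bipartite graph with check nodes = rows, variable nodes = columns, edges at the $1$-entries. A $k$-cycle is a closed walk of $k$ edges with distinct vertices and distinct edges. *)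

From mathcomp Require Import all_boot all_order all_algebra.
Set Implicit Arguments. Unset Strict Implicit. Unset Printing Implicit Defensive.
Import GRing.Theory.
Local Open Scope ring_scope.

(* F_2^l, used as the index set of rows and columns of N x N binary matrices,
   N = 2^l (the bijection with {1..N} is only a labeling). *)
Definition F2vec (l : nat) := 'rV['F_2]_l.

Definition bmat (l : nat) := F2vec l -> F2vec l -> 'F_2.

Definition Pmat (l : nat) (a : F2vec l) : bmat l :=
  fun x y => (y == x + a)%:R.

Definition Dmat (l om : nat) (xs : 'I_om -> F2vec l) : bmat l :=
  fun x y => \sum_(i < om) Pmat (xs i) x y.

(* Tanner graph: vertices = check nodes (inl row) + variable nodes (inr col). *)
Definition tvertex (l : nat) := (F2vec l + F2vec l)%type.

Definition tadj (l : nat) (H : bmat l) (p q : tvertex l) : bool :=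
  match p, q with
  | inl x, inr y => H x y == 1
  | inr y, inl x => H x y == 1
  | _, _ => false
  end.

Definition walk_edge (l k : nat) (w : {ffun 'I_k -> tvertex l}) (i : 'I_k)
  : {set tvertex l} := [set w i; w (ordS i)].

Definition cycle_walk (l : nat) (H : bmat l) (k : nat)
  (w : {ffun 'I_k -> tvertex l}) : bool :=
  [&& [forall i, tadj H (w i) (w (ordS i))],
      injectiveb w & injectiveb (walk_edge w)].

(* The k-cycles of the Tanner graph of H, as subgraphs (edge sets). *)
Definition kcycles (l : nat) (H : bmat l) (k : nat) : {set {set {set tvertex l}}} :=
  [set E | [exists w : {ffun 'I_k -> tvertex l},
             cycle_walk H w && (E == [set walk_edge w i | i : 'I_k])]].

Definition Rpred (l om : nat) (xs : 'I_om -> F2vec l)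
  (t : ('I_om * 'I_om * 'I_om) * ('I_om * 'I_om * 'I_om)) : bool :=
  let: ((u, v, w), (u', v', w')) := t in
  [&& u != v, v != w, u' != v', v' != w', u != u', w != w' &
      xs u + xs v + xs w == xs u' + xs v' + xs w'].

Definition Rcount (l om : nat) (xs : 'I_om -> F2vec l) : nat :=
  #|[set t | Rpred xs t]|.

(* Every k-cycle (k >= 3) of a graph is traced by exactly 2k closed walks
   (k starting vertices, two directions), and in the bipartite Tanner graph
   half of these walks start at a check node.  In the Tanner graph of D the
   edges are x -- x + x_i, so a 6-walk from the check node c is determined by
   c and its six edge labels.  Reading them as (u, v, w) forward and
   (u', v', w') backward from c, the walk closes up iff
   x_u + x_v + x_w = x_u' + x_v' + x_w', and its vertices are distinct iff
   consecutive labels differ (vertices of the same side lie at distance 2),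
   which are the six inequalities of R.  Hence 12 N_6 = 2 * 2^l * R. *)

From mathcomp Require Import all_boot all_order all_algebra ring.
Set Implicit Arguments. Unset Strict Implicit. Unset Printing Implicit Defensive.
Import GRing.Theory.
Local Open Scope ring_scope.

Lemma ordS_addr1 n (i : 'I_n.+2) : ordS i = i + 1.
Proof. by rewrite (add_Zp_1 (p := n.+2)). Qed.

Lemma ordS_neq n (i : 'I_n.+3) : ordS i != i.
Proof. by rewrite ordS_addr1 -{2}[i]addr0 (inj_eq (addrI i)). Qed.

Lemma ordS2_neq n (i : 'I_n.+3) : ordS (ordS i) != i.
Proof. by rewrite !ordS_addr1 -addrA -{2}[i]addr0 (inj_eq (addrI i)). Qed.

Lemma doubleton_eq (T : finType) (a b c d : T) :
  a != b -> [set a; b] = [set c; d] -> (a = c /\ b = d) \/ (a = d /\ b = c).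
Proof.
move=> ab Eabcd.
have /set2P[] : a \in [set c; d] by rewrite -Eabcd set21.
all: have /set2P[] : b \in [set c; d] by rewrite -Eabcd set22.
all: move=> Eb Ea; subst a b; rewrite ?eqxx in ab; by [left | right].
Qed.

Definition is_check l (p : tvertex l) : bool := if p is inl _ then true else false.

Lemma tadj_sym l (H : bmat l) : symmetric (tadj H).
Proof. by case=> ? [] ?. Qed.

Lemma tadj_is_check l (H : bmat l) p q : tadj H p q -> is_check q = ~~ is_check p.
Proof. by case: p q => ? [] ?. Qed.

Section CycleWalks.

Variables (l n : nat) (H : bmat l).
Local Notation walk := {ffun 'I_n.+3 -> tvertex l}.
Implicit Types (v w : walk) (i j : 'I_n.+3).

Definition walk_edges w := [set walk_edge w i | i : 'I_n.+3].

Definition rot_walk i w : walk := [ffun j => w (i + j)].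
Definition rev_walk i w : walk := [ffun j => w (i - j)].

Lemma walk_edge_inj w : injective w -> injective (walk_edge w).
Proof.
move=> w_inj i j /doubleton_eq [].
- by rewrite (inj_eq w_inj) eq_sym ordS_neq.
- by case=> /w_inj.
- by case=> /w_inj -> /w_inj /eqP; rewrite (negbTE (ordS2_neq _)).
Qed.

Lemma cycle_walkP w :
  reflect ((forall i, tadj H (w i) (w (ordS i))) /\ injective w) (cycle_walk H w).
Proof.
apply: (iffP and3P) => [[/forallP adj /injectiveP w_inj _] | [adj w_inj]] //.
by split; [apply/forallP | apply/injectiveP | apply/injectiveP/walk_edge_inj].
Qed.

Lemma kcycles_walk_edges :
  kcycles H n.+3 = walk_edges @: [set w : walk | cycle_walk H w].
Proof.
apply/setP => E; rewrite inE; apply/existsP/imsetP.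
  by case=> w /andP[cw /eqP ->]; exists w; rewrite ?inE.
by case=> w; rewrite inE => cw ->; exists w; rewrite cw eqxx.
Qed.

Lemma walk_edge_rot i w j : walk_edge (rot_walk i w) j = walk_edge w (i + j).
Proof. by rewrite /walk_edge !ffunE !ordS_addr1 addrA. Qed.

Lemma walk_edge_rev i w j : walk_edge (rev_walk i w) j = walk_edge w (i - ordS j).
Proof.
rewrite /walk_edge !ffunE !ordS_addr1 setUC; congr [set _; w _]; ring.
Qed.

Lemma walk_edges_rot i w : walk_edges (rot_walk i w) = walk_edges w.
Proof.
apply/setP => E; apply/imsetP/imsetP => [[j _ ->] | [j _ ->]].
  by exists (i + j); rewrite ?walk_edge_rot.
by exists (j - i); rewrite ?walk_edge_rot // addrC subrK.
Qed.

Lemma walk_edges_rev i w : walk_edges (rev_walk i w) = walk_edges w.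
Proof.
apply/setP => E; apply/imsetP/imsetP => [[j _ ->] | [j _ ->]].
  by exists (i - ordS j); rewrite ?walk_edge_rev.
exists (i - ordS j); rewrite ?walk_edge_rev //; congr walk_edge.
rewrite !ordS_addr1; ring.
Qed.

Lemma cycle_walk_rot i w : cycle_walk H w -> cycle_walk H (rot_walk i w).
Proof.
case/cycle_walkP => adj w_inj; apply/cycle_walkP; split => [j | j j'].
  by rewrite !ffunE !ordS_addr1 addrA -ordS_addr1.
by rewrite !ffunE => /w_inj /addrI.
Qed.

Lemma cycle_walk_rev i w : cycle_walk H w -> cycle_walk H (rev_walk i w).
Proof.
case/cycle_walkP => adj w_inj; apply/cycle_walkP; split => [j | j j'].
  rewrite !ffunE; have -> : i - j = ordS (i - ordS j) by rewrite !ordS_addr1; ring.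
  by rewrite tadj_sym.
by rewrite !ffunE => /w_inj /addrI /oppr_inj.
Qed.

Lemma cycle_walk_eq v w : cycle_walk H v -> cycle_walk H w ->
  walk_edges v = walk_edges w -> v 0 = w 0 -> v 1 = w 1 -> v = w.
Proof.
move=> /cycle_walkP[_ v_inj] /cycle_walkP[_ w_inj] Evw.
have step j : v j = w j -> v (ordS j) = w (ordS j) ->
    v (ordS (ordS j)) = w (ordS (ordS j)).
  move=> Ej Ej1.
  have : walk_edge v (ordS j) \in walk_edges w by rewrite -Evw imset_f.
  case/imsetP => m _ /doubleton_eq [].
  - by rewrite (inj_eq v_inj) eq_sym ordS_neq.
  - by case; rewrite Ej1 => /w_inj <-.
  - case; rewrite Ej1 => /w_inj /ordS_inj <-; rewrite -Ej => /v_inj /eqP.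
    by rewrite (negbTE (ordS2_neq _)).
move=> E0 E1; have Em (m : nat) : v m%:R = w m%:R /\ v m.+1%:R = w m.+1%:R.
  elim: m => [|m [IH IH1]]; first by rewrite mulr1n.
  by split; rewrite // !mulrSr -!ordS_addr1 step ?ordS_addr1 -?mulrSr.
by apply/ffunP => i; rewrite -[i]natr_Zp; case: (Em i).
Qed.

Definition dihedral_walk w (p : 'I_n.+3 * bool) : walk :=
  if p.2 then rot_walk p.1 w else rev_walk p.1 w.

Lemma dihedral_walk_inj w : injective w -> injective (dihedral_walk w).
Proof.
move=> w_inj [i b] [j c] /ffunP E.
have /w_inj Eij : w i = w j.
  by move: (E 0); case: b c {E} => [] [] /=; rewrite !ffunE ?addr0 ?subr0.
have one_neqN1 : (1 == -1 :> 'I_n.+3) = false by rewrite -addr_eq0.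
subst j; congr pair; move: (E 1).
by case: b c {E} => [] [] //=; rewrite !ffunE => /w_inj /eqP;
  rewrite (inj_eq (addrI i)) ?one_neqN1 // eq_sym one_neqN1.
Qed.

Lemma cycle_walks_same_edges w0 : cycle_walk H w0 ->
  [set w : walk | cycle_walk H w & walk_edges w == walk_edges w0]
    = dihedral_walk w0 @: setT.
Proof.
move=> c0; apply/setP => w; rewrite inE.
apply/andP/imsetP => [[cw /eqP Ew] | [[i b] _ ->]]; last first.
  by case: b; rewrite /= ?cycle_walk_rot ?cycle_walk_rev
    ?walk_edges_rot ?walk_edges_rev.
have /cycle_walkP[_ w_inj] := cw.
have : walk_edge w 0 \in walk_edges w0 by rewrite -Ew imset_f.
case/imsetP => m _ /doubleton_eq [].
- by rewrite (inj_eq w_inj) eq_sym ordS_neq.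
- case=> E0 E1; exists (m, true) => //=.
  apply: (cycle_walk_eq cw (cycle_walk_rot m c0)); rewrite ?walk_edges_rot //.
    by rewrite ffunE addr0.
  by rewrite ffunE -ordS_addr1 -[1]add0r -ordS_addr1.
- case=> E0 E1; exists (ordS m, false) => //=.
  apply: (cycle_walk_eq cw (cycle_walk_rev _ c0)); rewrite ?walk_edges_rev //.
    by rewrite ffunE subr0.
  by rewrite ffunE ordS_addr1 addrK -[1]add0r -ordS_addr1.
Qed.

Lemma card_cycle_walks_same_edges w0 : cycle_walk H w0 ->
  #|[set w : walk | cycle_walk H w & walk_edges w == walk_edges w0]| = (2 * n.+3)%N.
Proof.
move=> c0; have /cycle_walkP[_ w0_inj] := c0.
rewrite cycle_walks_same_edges // card_imset; last exact: dihedral_walk_inj.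
by rewrite cardsT card_prod card_ord card_bool mulnC.
Qed.

Lemma card_cycle_walks :
  #|[set w : walk | cycle_walk H w]| = (#|kcycles H n.+3| * (2 * n.+3))%N.
Proof.
rewrite kcycles_walk_edges -sum1_card (partition_big_imset walk_edges) /=.
rewrite -sum_nat_const; apply: eq_bigr => _ /imsetP[w0 c0 ->].
rewrite inE in c0; rewrite -(card_cycle_walks_same_edges c0) -sum1_card.
by apply: eq_bigl => w; rewrite !inE.
Qed.

Lemma rot_walkK i : cancel (rot_walk i) (rot_walk (- i)).
Proof. by move=> w; apply/ffunP => j; rewrite !ffunE addNKr. Qed.

Lemma cycle_walk_is_check w i :
  cycle_walk H w -> is_check (w (ordS i)) = ~~ is_check (w i).
Proof. by case/cycle_walkP => adj _; apply: tadj_is_check (adj i). Qed.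

Lemma card_cycle_walks_check :
  #|[set w : walk | cycle_walk H w]|
    = (2 * #|[set w : walk | cycle_walk H w & is_check (w 0%R)]|)%N.
Proof.
rewrite -(cardsID [set w : walk | is_check (w 0)]) mul2n -addnn; congr addn.
  by apply: eq_card => w; rewrite !inE.
rewrite -[in RHS](card_imset _ (can_inj (rot_walkK 1))); apply: eq_card => w.
rewrite !inE; apply/andP/imsetP => [[w0_var cw] | [v]].
  exists (rot_walk (-1) w); last by rewrite -{1}[1]opprK rot_walkK.
  rewrite inE cycle_walk_rot // ffunE addr0.
  by rewrite -(negbK (is_check _)) -cycle_walk_is_check // ordS_addr1 addNr.
rewrite inE => /andP[cv v0_check] ->; rewrite cycle_walk_rot // ffunE addr0.
by rewrite -[1]add0r -ordS_addr1 cycle_walk_is_check // v0_check.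
Qed.

End CycleWalks.

Definition tvec l (p : tvertex l) : F2vec l := match p with inl x | inr x => x end.

Lemma tvertex_eq l (p q : tvertex l) :
  is_check p = is_check q -> tvec p = tvec q -> p = q.
Proof. by case: p q => ? [] ? //= _ ->. Qed.

Lemma F2mx_addrr m k (A : 'M['F_2]_(m, k)) : A + A = 0.
Proof.
by apply/matrixP => i j; rewrite !mxE (addrr_pchar2 (pchar_Fp (isT : prime 2))).
Qed.

Lemma F2mx_addrK m k (A B : 'M['F_2]_(m, k)) : A + B + B = A.
Proof. by rewrite -addrA F2mx_addrr addr0. Qed.

Lemma F2mx_addr_eq0 m k (A B : 'M['F_2]_(m, k)) : (A + B == 0) = (A == B).
Proof. by rewrite -[A == B](inj_eq (addIr B)) F2mx_addrr. Qed.

Lemma eq_addr_id (V : zmodType) (x y : V) : (x == x + y) = (y == 0).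
Proof. by rewrite -{1}[x]addr0 (inj_eq (addrI x)) eq_sym. Qed.

Lemma F2mx_addr_swap m k (A B C : 'M['F_2]_(m, k)) : A = B + C -> B = A + C.
Proof. by move=> ->; rewrite F2mx_addrK. Qed.

Lemma F2mx_eq_addr m k (A B C : 'M['F_2]_(m, k)) : (A == B + C) = (B == A + C).
Proof. by apply/eqP/eqP => ->; rewrite F2mx_addrK. Qed.

Local Notation i0 := (@ord0 5).
Local Notation i1 := (ordS i0).
Local Notation i2 := (ordS i1).
Local Notation i3 := (ordS i2).
Local Notation i4 := (ordS i3).
Local Notation i5 := (ordS i4).

Lemma ordS_i5 : ordS i5 = i0. Proof. exact: val_inj. Qed.

Lemma ord6_ind (P : 'I_6 -> Prop) :
  P i0 -> P i1 -> P i2 -> P i3 -> P i4 -> P i5 -> forall i, P i.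
Proof.
move=> P0 P1 P2 P3 P4 P5 [[|[|[|[|[|[|//]]]]]] lt_i6].
- by rewrite (_ : Ordinal _ = i0) //; apply: val_inj.
- by rewrite (_ : Ordinal _ = i1) //; apply: val_inj.
- by rewrite (_ : Ordinal _ = i2) //; apply: val_inj.
- by rewrite (_ : Ordinal _ = i3) //; apply: val_inj.
- by rewrite (_ : Ordinal _ = i4) //; apply: val_inj.
- by rewrite (_ : Ordinal _ = i5) //; apply: val_inj.
Qed.

Section DmatCycles.

Variables (l om : nat) (xs : 'I_om -> F2vec l).
Hypothesis xs_inj : injective xs.

Lemma Dmat_eq1 x y : (Dmat xs x y == 1) = [exists i, y == x + xs i].
Proof.
rewrite /Dmat /Pmat; case: existsP => [[i /eqP yi] | no_i].
  rewrite (bigD1 i) //= yi eqxx big1 ?addr0 // => j ji.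
  by case: eqP => // /addrI /xs_inj ij; rewrite ij eqxx in ji.
rewrite big1 ?(eq_sym 0) ?oner_eq0 // => j _.
by case: eqP => // yj; case: no_i; exists j; apply/eqP.
Qed.

Lemma tadj_Dmat p q : tadj (Dmat xs) p q
  = (is_check p != is_check q) && [exists i, tvec q == tvec p + xs i].
Proof.
case: p q => x [] y //=; rewrite Dmat_eq1 //.
by apply: eq_existsb => i; rewrite F2mx_eq_addr.
Qed.

Lemma Dmat_walk_labels n (w : {ffun 'I_n.+3 -> tvertex l}) :
  cycle_walk (Dmat xs) w ->
  exists e : 'I_n.+3 -> 'I_om, forall i, tvec (w (ordS i)) = tvec (w i) + xs (e i).
Proof.
case/cycle_walkP => adj _.
have label i : exists j, tvec (w (ordS i)) = tvec (w i) + xs j.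
  by move: (adj i); rewrite tadj_Dmat => /andP[_ /existsP[j /eqP]]; exists j.
by case/fin_all_exists: label => e; exists e.
Qed.

Lemma Dmat_walk_labels_neq n (w : {ffun 'I_n.+3 -> tvertex l})
    (e : 'I_n.+3 -> 'I_om) :
  cycle_walk (Dmat xs) w ->
  (forall i, tvec (w (ordS i)) = tvec (w i) + xs (e i)) ->
  forall i, e i != e (ordS i).
Proof.
move=> cw we i; apply/eqP => Ee; have /cycle_walkP[_ w_inj] := cw.
have /w_inj/eqP : w (ordS (ordS i)) = w i.
  apply: tvertex_eq; first by rewrite !(cycle_walk_is_check _ cw) negbK.
  by rewrite !we -Ee F2mx_addrK.
by rewrite (negbTE (ordS2_neq _)).
Qed.

(* The walk c, c + x_u, c + x_u + x_v, c + x_u + x_v + x_w, c + x_u' + x_v',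
   c + x_u'; [w'] only enters through the closing condition of [Rpred]. *)
Definition hexagon (c : F2vec l)
    (t : ('I_om * 'I_om * 'I_om) * ('I_om * 'I_om * 'I_om)) :
    {ffun 'I_6 -> tvertex l} :=
  let: ((u, v, w), (u', v', _)) := t in
  [ffun j : 'I_6 => nth (inl c)
     [:: inl c; inr (c + xs u); inl (c + xs u + xs v);
         inr (c + xs u + xs v + xs w); inl (c + xs u' + xs v'); inr (c + xs u')] j].

Lemma hexagon_cycle_walk c t : Rpred xs t -> cycle_walk (Dmat xs) (hexagon c t).
Proof.
case: t => [[[u v] w] [[u' v'] w']].
case/and5P => uv vw uv' vw' /and3P[uu' ww' /eqP Esum].
have xs_add_eq0 a b : (xs a + xs b == 0) = (a == b).
  by rewrite F2mx_addr_eq0 (inj_eq xs_inj).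
have Euv : (xs u + xs v == xs u' + xs v') = (w == w').
  by rewrite -(inj_eq (addIr (xs w))) Esum (inj_eq (addrI _)) (inj_eq xs_inj) eq_sym.
have Euvw : (xs u + (xs v + xs w) == xs u') = (v' == w').
  by rewrite addrA Esum -addrA eq_sym eq_addr_id xs_add_eq0.
apply/cycle_walkP; split.
  case=> [[|[|[|[|[|[|//]]]]]] ?]; rewrite !ffunE tadj_Dmat /=; apply/existsP.
  - by exists u.
  - by exists v.
  - by exists w.
  - exists w'; suff -> : c + xs u + xs v + xs w = c + xs u' + xs v' + xs w'.
      by rewrite F2mx_addrK.
    by rewrite -!addrA !(addrA (xs _)) Esum.
  - by exists v'; rewrite F2mx_addrK.
  - by exists u'; rewrite F2mx_addrK.
move=> i j; rewrite !ffunE => /eqP; rewrite nth_uniq // => [/eqP/val_inj //|].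
apply: (@map_uniq _ _ (fun p => (is_check p, tvec p))).
rewrite /= !inE !xpair_eqE /= -!addrA !(inj_eq (addrI _)) !eq_addr_id.
by rewrite !xs_add_eq0 (inj_eq xs_inj) Euv Euvw (negbTE uv) (negbTE uv')
  (negbTE vw) (negbTE vw') (negbTE uu') (negbTE ww').
Qed.

Lemma cycle_walk_hexagon (w : {ffun 'I_6 -> tvertex l}) :
  cycle_walk (Dmat xs) w -> is_check (w 0) ->
  exists c t, Rpred xs t /\ w = hexagon c t.
Proof.
move=> cw w0_check; have [e we] := Dmat_walk_labels cw.
have e_neq := Dmat_walk_labels_neq cw we.
have /F2mx_addr_swap w5 := we i5; rewrite ordS_i5 in w5.
have /F2mx_addr_swap w4 := we i4; have /F2mx_addr_swap w3 := we i3.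
have e50 := e_neq i5; rewrite ordS_i5 eq_sym in e50.
exists (tvec (w i0)), ((e i0, e i1, e i2), (e i5, e i4, e i3)); split.
  rewrite /Rpred /= (eq_sym (e i5)) (eq_sym (e i4) (e i3)) !e_neq e50 /=.
  by apply/eqP/(addrI (tvec (w i0))); rewrite !addrA -!we -w5 -w4 -w3.
apply/ffunP; apply: ord6_ind; rewrite ffunE /=; apply: tvertex_eq => /=;
  by rewrite ?(cycle_walk_is_check _ cw) ?w0_check ?w4 ?w5 ?we.
Qed.

Lemma hexagon_inj c c' t t' : Rpred xs t -> Rpred xs t' ->
  hexagon c t = hexagon c' t' -> (c, t) = (c', t').
Proof.
case: t t' => [[[u v] w] [[u' v'] w']] [[[u2 v2] w2] [[u2' v2'] w2']].
case/and5P=> _ _ _ _ /and3P[_ _ /eqP Esum]; case/and5P=> _ _ _ _ /and3P[_ _ /eqP].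
move=> Esum2 /ffunP Eh; move: (Eh i0) (Eh i1) (Eh i2) (Eh i3) (Eh i5) (Eh i4) Esum2.
rewrite !ffunE /= => -[<-] -[/addrI /xs_inj <-] -[/addrI /xs_inj <-].
move=> -[/addrI /xs_inj <-] -[/addrI /xs_inj <-] -[/addrI /xs_inj <-].
by rewrite Esum => /addrI/xs_inj ->.
Qed.

Lemma card_cycle_walks_check_Dmat :
  #|[set w : {ffun 'I_6 -> tvertex l} | cycle_walk (Dmat xs) w & is_check (w 0)]|
    = (2 ^ l * Rcount xs)%N.
Proof.
have -> : [set w : {ffun 'I_6 -> tvertex l} | cycle_walk (Dmat xs) w & is_check (w 0)]
    = [set hexagon p.1 p.2 | p in setX [set: F2vec l] [set t | Rpred xs t]].
  apply/setP => w; rewrite inE; apply/andP/imsetP => [[cw w0_check] | [[c t]]].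
    have [c [t [Rt ->]]] := cycle_walk_hexagon cw w0_check.
    by exists (c, t); rewrite // !inE.
  rewrite !inE /= => Rt ->; split; first exact: hexagon_cycle_walk.
  by case: t Rt => [[[? ?] ?] [[? ?] ?]]; rewrite ffunE.
rewrite card_in_imset => [|[c t] [c' t']]; last first.
  by rewrite !inE /= => Rt Rt'; apply: hexagon_inj.
by rewrite cardsX cardsT card_mx card_Fp // mul1n.
Qed.

End DmatCycles.

Theorem mainTheorem13 (l om : nat) (xs : 'I_om -> F2vec l) :
  (1 <= l)%N -> injective xs ->
  (#|kcycles (Dmat xs) 6|%:R : rat)
    = ((2 ^ l)%N%:R / 6%:R * (Rcount xs)%:R)%R.
Proof.
move=> _ xs_inj.
have : (2 * (#|kcycles (Dmat xs) 6| * 6) = 2 * (2 ^ l * Rcount xs))%N.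
  by rewrite -card_cycle_walks_check_Dmat // -card_cycle_walks_check
    card_cycle_walks mulnCA.
move/eqP; rewrite eqn_mul2l /= => /eqP count6.
by rewrite mulrAC -natrM -count6 natrM mulfK.
Qed.
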